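(* Let $P$ be a finite poset and let $\varphi:P\to P$ satisfy $\varphi\circ\varphi=\mathrm{id}_P$ and $x\le y\iff\varphi(x)\le\varphi(y)$ for all $x,y\in P$. Let $F:=\{x\in P:\varphi(x)=x\}$, regarded as an induced subposet of $P$. If $F$ is a down set of $P$ (i.e., $x\in F$ and $y\le x$ imply $y\in F$), then the parallel union $P+F'$, where $F'$ is a disjoint copy of $F$, is a $\forall$-game; equivalently, $P$ and $F$ are equivalent games, and $g(P)=g(F)$.
   Context: A finite poset $P$ defines a poset game: two players alternate moves; a move consists of choosing a point $x$ of the current poset $Q$ and replacing $Q$ by $Q_x:=\{y\in Q: x\not\le y\}$; the first player unable to move loses. $P$ is an $\exists$-game if the first player has a winning strategy and a $\forall$-game otherwise. The parallel union $P+Q$ of posets is their disjoint union with points of $P$ incomparable to points of $Q$. For finite posets, $P$ and $Q$ are equivalent iff $P+Q$ is a $\forall$-game. The g-number (Grundy number) is defined recursively by $g(P):=\operatorname{mex}\{g(P_x):x\in P\}$, where $\operatorname{mex}A$ is the least natural number not in $A$ (so $g(\emptyset)=0$). *)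

From mathcomp Require Import all_boot all_order.
Set Implicit Arguments. Unset Strict Implicit. Unset Printing Implicit Defensive.

(* A game position is a finite subset Q of a finite type T, with the order
   given by a relation le (the induced subposet on Q). *)
Section PosetGame.
Variables (T : finType) (le : rel T).

Definition move (Q : {set T}) (x : T) : {set T} := [set y in Q | ~~ le x y].

(* fuel-based recursion; fuel #|Q| suffices since a move removes x (le refl) *)
Fixpoint winf (n : nat) (Q : {set T}) : bool :=
  if n is n'.+1 then [exists x in Q, ~~ winf n' (move Q x)] else false.

Definition exists_game (Q : {set T}) : bool := winf #|Q| Q.
Definition forall_game (Q : {set T}) : bool := ~~ exists_game Q.

Definition mex (s : seq nat) : nat := find (fun n => n \notin s) (iota 0 (size s).+1).

Fixpoint grundyf (n : nat) (Q : {set T}) : nat :=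
  if n is n'.+1 then mex [seq grundyf n' (move Q x) | x <- enum Q] else 0.

Definition grundy (Q : {set T}) : nat := grundyf #|Q| Q.
End PosetGame.

Definition par_le (T1 T2 : finType) (le1 : rel T1) (le2 : rel T2) : rel (T1 + T2) :=
  fun a b => match a, b with
             | inl x, inl y => le1 x y
             | inr x, inr y => le2 x y
             | _, _ => false
             end.

Definition par_set (T1 T2 : finType) (A : {set T1}) (B : {set T2}) : {set T1 + T2} :=
  [set z | match z with inl x => x \in A | inr y => y \in B end].

(* Every phi-invariant position Q of P is equivalent to its fixed part
   Q :&: F.  A move at a fixed point is matched by the same move in Q :&: F.
   A move at a non-fixed x is reversible: answering it by phi x yields a
   phi-invariant position again, and since F is a down set containing neither
   x nor phi x, this pair of moves removes no point of F.  A relation between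
   positions with these matching and reversing properties makes the parallel
   union a second-player win and preserves Grundy values, by induction on the
   size of the first position. *)
From mathcomp Require Import all_boot all_order.
Set Implicit Arguments. Unset Strict Implicit. Unset Printing Implicit Defensive.

Import Order.POrderTheory.

Lemma mex_has (s : seq nat) : has (fun n => n \notin s) (iota 0 (size s).+1).
Proof.
apply/negPn/negP => /hasPn notin_s.
have sub : {subset iota 0 (size s).+1 <= s} by move=> k /notin_s; rewrite negbK.
by have := uniq_leq_size (iota_uniq 0 _) sub; rewrite size_iota ltnn.
Qed.

Lemma mex_notin (s : seq nat) : mex s \notin s.
Proof.
have := nth_find 0 (mex_has s); have := mex_has s.
by rewrite has_find size_iota => lt_mex; rewrite nth_iota // add0n.
Qed.

Lemma mex_min (s : seq nat) k : k < mex s -> k \in s.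
Proof.
move=> lt_k; have := before_find 0 lt_k.
have lt_ks : k < (size s).+1.
  by apply: leq_trans lt_k _; rewrite /mex -{2}(size_iota 0 (size s).+1) find_size.
by rewrite nth_iota // add0n => /negbFE.
Qed.

Lemma mex_uniq (s : seq nat) m :
  m \notin s -> (forall k, k < m -> k \in s) -> mex s = m.
Proof.
move=> m_notin below_m; case: (ltngtP (mex s) m) => // [/below_m | /mex_min].
  by rewrite (negbTE (mex_notin s)).
by rewrite (negbTE m_notin).
Qed.

Section Moves.
Variables (T : finType) (le : rel T).

Lemma move_sub (Q : {set T}) x : move le Q x \subset Q.
Proof. by apply/subsetP=> y; rewrite inE => /andP[]. Qed.

Lemma move_setI (Q A : {set T}) y : move le (Q :&: A) y = move le Q y :&: A.
Proof. by apply/setP => z; rewrite !inE andbAC. Qed.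

Hypothesis le_refl : reflexive le.

Lemma card_move (Q : {set T}) x : x \in Q -> #|move le Q x| < #|Q|.
Proof.
move=> xQ; apply: proper_card; rewrite properE move_sub /=.
by apply/subsetPn; exists x => //; rewrite inE le_refl andbF.
Qed.

Lemma winf_fuel n m (Q : {set T}) :
  #|Q| <= n -> #|Q| <= m -> winf le n Q = winf le m Q.
Proof.
elim: n m Q => [|n IH] [|m] Q //= Qn Qm.
- move: Qn; rewrite leqn0 cards_eq0 => /eqP->.
  by apply/esym/existsP => -[x]; rewrite inE.
- move: Qm; rewrite leqn0 cards_eq0 => /eqP->.
  by apply/existsP => -[x]; rewrite inE.
apply: eq_existsb => x; case xQ: (x \in Q) => //=; congr (~~ _).
by apply: IH; rewrite -ltnS (leq_trans (card_move xQ)).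
Qed.

Lemma exists_gameE (Q : {set T}) :
  exists_game le Q = [exists x in Q, ~~ exists_game le (move le Q x)].
Proof.
rewrite /exists_game; case cardQ: #|Q| => [|n] /=.
  move/eqP: cardQ; rewrite cards_eq0 => /eqP->.
  by apply/esym/existsP => -[x]; rewrite inE.
apply: eq_existsb => x; case xQ: (x \in Q) => //=; congr (~~ _).
by apply: winf_fuel => //; rewrite -ltnS -cardQ card_move.
Qed.

Lemma grundyf_fuel n m (Q : {set T}) :
  #|Q| <= n -> #|Q| <= m -> grundyf le n Q = grundyf le m Q.
Proof.
elim: n m Q => [|n IH] [|m] Q //= Qn Qm.
- by move: Qn; rewrite leqn0 cards_eq0 => /eqP->; rewrite enum_set0.
- by move: Qm; rewrite leqn0 cards_eq0 => /eqP->; rewrite enum_set0.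
congr mex; apply/eq_in_map => x; rewrite mem_enum => xQ.
by apply: IH; rewrite -ltnS (leq_trans (card_move xQ)).
Qed.

Lemma grundyE (Q : {set T}) :
  grundy le Q = mex [seq grundy le (move le Q x) | x <- enum Q].
Proof.
rewrite /grundy; case cardQ: #|Q| => [|n] /=.
  by move/eqP: cardQ; rewrite cards_eq0 => /eqP->; rewrite enum_set0.
congr mex; apply/eq_in_map => x; rewrite mem_enum => xQ.
by apply: grundyf_fuel => //; rewrite -ltnS -cardQ card_move.
Qed.

End Moves.

Section ParallelUnion.
Variables (T1 T2 : finType) (le1 : rel T1) (le2 : rel T2).

Lemma par_le_refl : reflexive le1 -> reflexive le2 -> reflexive (par_le le1 le2).
Proof. by move=> refl1 refl2 [x|x] /=. Qed.

Lemma par_set_inl (A : {set T1}) (B : {set T2}) x : (inl x \in par_set A B) = (x \in A).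
Proof. by rewrite inE. Qed.

Lemma par_set_inr (A : {set T1}) (B : {set T2}) y : (inr y \in par_set A B) = (y \in B).
Proof. by rewrite inE. Qed.

Lemma move_inl (A : {set T1}) (B : {set T2}) x :
  move (par_le le1 le2) (par_set A B) (inl x) = par_set (move le1 A x) B.
Proof. by apply/setP => -[y|y]; rewrite !inE //= andbT. Qed.

Lemma move_inr (A : {set T1}) (B : {set T2}) y :
  move (par_le le1 le2) (par_set A B) (inr y) = par_set A (move le2 B y).
Proof. by apply/setP => -[z|z]; rewrite !inE //= andbT. Qed.

End ParallelUnion.

Section ReversibleSimulation.
Variables (T1 T2 : finType) (le1 : rel T1) (le2 : rel T2).
Hypotheses (le1_refl : reflexive le1) (le2_refl : reflexive le2).
Variable E : {set T1} -> {set T2} -> Prop.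

(* A move in Q is either simulated in Q', or reversible: some answer to it
   brings the game back to a position related to Q'. *)
Hypothesis sim_left : forall Q Q' x, E Q Q' -> x \in Q ->
  (exists2 y, y \in Q' & E (move le1 Q x) (move le2 Q' y))
  \/ (exists2 z, z \in move le1 Q x & E (move le1 (move le1 Q x) z) Q').
Hypothesis sim_right : forall Q Q' y, E Q Q' -> y \in Q' ->
  exists2 x, x \in Q & E (move le1 Q x) (move le2 Q' y).

Lemma sim_forall_game Q Q' : E Q Q' -> forall_game (par_le le1 le2) (par_set Q Q').
Proof.
have le_refl := par_le_refl le1_refl le2_refl.
have [n] := ubnP #|Q|; elim: n Q Q' => // n IH Q Q' /ltnSE Qn EQQ'.
have IHQ (R : {set T1}) (R' : {set T2}) :
    #|R| < #|Q| -> E R R' -> forall_game (par_le le1 le2) (par_set R R').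
  by move=> RQ; apply: IH; apply: leq_trans RQ Qn.
rewrite /forall_game exists_gameE // negb_exists_in; apply/forall_inP.
move=> [x|y]; rewrite ?par_set_inl ?par_set_inr => inQ.
all: rewrite negbK exists_gameE //.
- have Qx_lt := card_move le1_refl inQ.
  apply/existsP; case: (sim_left EQQ' inQ) => [[y yQ' Emove] | [z zQx Ereverse]].
    by exists (inr y); rewrite move_inl par_set_inr yQ' move_inr; apply: IHQ.
  exists (inl z); rewrite move_inl par_set_inl zQx move_inl; apply: IHQ Ereverse.
  exact: ltn_trans (card_move le1_refl zQx) Qx_lt.
- have [x xQ Emove] := sim_right EQQ' inQ.
  apply/existsP; exists (inl x); rewrite move_inr par_set_inl xQ move_inl.
  exact: IHQ (card_move le1_refl xQ) Emove.
Qed.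

Lemma sim_grundy Q Q' : E Q Q' -> grundy le1 Q = grundy le2 Q'.
Proof.
have [n] := ubnP #|Q|; elim: n Q Q' => // n IH Q Q' /ltnSE Qn EQQ'.
have IHQ (R : {set T1}) (R' : {set T2}) :
    #|R| < #|Q| -> E R R' -> grundy le1 R = grundy le2 R'.
  by move=> RQ; apply: IH; apply: leq_trans RQ Qn.
rewrite grundyE // [grundy le2 Q']grundyE //.
set opts' := [seq grundy le2 (move le2 Q' y) | y <- enum Q'].
apply: mex_uniq.
- apply/mapP => -[x]; rewrite mem_enum => xQ.
  have Qx_lt := card_move le1_refl xQ.
  case: (sim_left EQQ' xQ) => [[y yQ' Emove] | [z zQx Ereverse]].
    rewrite (IHQ _ _ Qx_lt Emove) => gxy.
    have := mex_notin opts'; rewrite gxy.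
    by case/mapP; exists y; rewrite ?mem_enum.
  rewrite grundyE // => gxz.
  have := mex_notin
    [seq grundy le1 (move le1 (move le1 Q x) z) | z <- enum (move le1 Q x)].
  rewrite -gxz; case/mapP; exists z; first by rewrite mem_enum.
  have Qxz_lt := ltn_trans (card_move le1_refl zQx) Qx_lt.
  by rewrite (IHQ _ _ Qxz_lt Ereverse) [grundy le2 Q']grundyE.
- move=> k /mex_min /mapP [y]; rewrite mem_enum => yQ' ->.
  have [x xQ Emove] := sim_right EQQ' yQ'.
  apply/mapP; exists x; first by rewrite mem_enum.
  by rewrite (IHQ _ _ (card_move le1_refl xQ) Emove).
Qed.

End ReversibleSimulation.

Section FixedPoints.
Variables (d : Order.disp_t) (T : finPOrderType d) (phi : T -> T).
Hypothesis phiK : involutive phi.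
Hypothesis le_phi : forall x y : T, (x <= y)%O = (phi x <= phi y)%O.
Hypothesis fixed_down : forall x y : T, phi x = x -> (y <= x)%O -> phi y = y.

Local Notation le := (@Order.le d T).
Local Notation fixed := [set x : T | phi x == x].

Definition phi_invariant (Q : {set T}) := forall z, (phi z \in Q) = (z \in Q).

Lemma le_phi_fixed x : (x <= phi x)%O -> phi x = x.
Proof. by move=> le_x_phix; apply: le_anti; rewrite le_phi phiK le_x_phix. Qed.

Lemma phi_invariant_move_fixed Q y :
  phi_invariant Q -> phi y = y -> phi_invariant (move le Q y).
Proof. by move=> invQ phiy z; rewrite !inE invQ -{1}phiy -le_phi. Qed.

Lemma phi_invariant_move_pair Q x :
  phi_invariant Q -> phi_invariant (move le (move le Q x) (phi x)).
Proof.
move=> invQ z; rewrite !inE invQ le_phi phiK -[(phi x <= phi z)%O]le_phi.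
by rewrite andbAC.
Qed.

Lemma move_pair_setI_fixed Q x :
  phi x != x -> move le (move le Q x) (phi x) :&: fixed = Q :&: fixed.
Proof.
move=> x_nfixed; apply/setP => z; rewrite !inE.
case: eqP => [phiz | _]; rewrite ?andbF // !andbT.
have x_nle : (x <= z)%O = false.
  by apply: (contraNF _ x_nfixed) => /(fixed_down phiz)->.
have phix_nle : (phi x <= z)%O = false.
  by apply: (contraNF _ x_nfixed) => /(fixed_down phiz); rewrite phiK => <-.
by rewrite x_nle phix_nle !andbT.
Qed.

Lemma phi_in_move Q x :
  phi_invariant Q -> x \in Q -> phi x != x -> phi x \in move le Q x.
Proof.
move=> invQ xQ x_nfixed; rewrite inE invQ xQ /=.
by apply: contraNN x_nfixed => /le_phi_fixed->.
Qed.

Definition fixed_part (Q : {set T}) (Q' : {set T}) :=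
  phi_invariant Q /\ Q' = Q :&: fixed.

Lemma fixed_part_left Q Q' x : fixed_part Q Q' -> x \in Q ->
  (exists2 y, y \in Q' & fixed_part (move le Q x) (move le Q' y))
  \/ (exists2 z, z \in move le Q x & fixed_part (move le (move le Q x) z) Q').
Proof.
move=> [invQ ->] xQ; case: (eqVneq (phi x) x) => [phix | x_nfixed].
  left; exists x; first by rewrite !inE xQ phix /=.
  by split; [exact: phi_invariant_move_fixed | rewrite move_setI].
right; exists (phi x); first exact: phi_in_move.
by split; [exact: phi_invariant_move_pair | rewrite move_pair_setI_fixed].
Qed.

Lemma fixed_part_right Q Q' y : fixed_part Q Q' -> y \in Q' ->
  exists2 x, x \in Q & fixed_part (move le Q x) (move le Q' y).
Proof.
move=> [invQ ->]; rewrite !inE => /andP[yQ /eqP phiy]; exists y => //.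
by split; [exact: phi_invariant_move_fixed | rewrite move_setI].
Qed.

End FixedPoints.

Theorem mainTheorem3 (d : Order.disp_t) (T : finPOrderType d) (phi : T -> T) :
  involutive phi ->
  (forall x y : T, (x <= y)%O = (phi x <= phi y)%O) ->
  (forall x y : T, phi x = x -> (y <= x)%O -> phi y = y) ->
  forall_game (par_le (@Order.le d T) (@Order.le d T))
              (par_set [set: T] [set x : T | phi x == x])
  /\ grundy (@Order.le d T) [set: T] = grundy (@Order.le d T) [set x : T | phi x == x].
Proof.
move=> phiK le_phi fixed_down.
have le_refl : reflexive (@Order.le d T) := @lexx d T.
have left := fixed_part_left phiK le_phi fixed_down.
have right := fixed_part_right le_phi.
have whole : fixed_part phi [set: T] [set x : T | phi x == x].
  by split; [move=> z; rewrite !inE | rewrite setTI].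
split; [exact (sim_forall_game le_refl le_refl left right whole)
       | exact (sim_grundy le_refl le_refl left right whole)].
Qed.
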